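(* For all integers $n\ge 2$ and $1\le k<n$, the domination number of $H_B(n,k)$ is $\gamma(H_B(n,k))=\binom{n}{k}$.
   Context: Fix integers $n\ge 2$ and $1\le k<n$ and positive real numbers $x_1<x_2<\dots<x_n$. Let $\mathscr{B}_n=\{\pm x_1,\pm x_2,\dots,\pm x_{n-1},x_n\}$ (so $-x_n\notin\mathscr{B}_n$). Let $\phi(\mathscr{B}_n)$ be the family of all nonempty subsets $S\subseteq\mathscr{B}_n$ whose elements have pairwise distinct absolute values and whose element of largest absolute value is positive. Let $\mathscr{B}_n^+=\{x_1,\dots,x_n\}$, let $V_1$ be the set of all $k$-element subsets of $\mathscr{B}_n^+$, and let $V_2=\phi(\mathscr{B}_n)\setminus V_1$. For $A\in\phi(\mathscr{B}_n)$ put $A^\dagger=\{|a|:a\in A\}$. The bipartite Kneser B type-$k$ graph $H_B(n,k)$ is the simple graph with vertex set $V_1\cup V_2$ in which $X\in V_1$ and $Y\in V_2$ are adjacent if and only if $X\subseteq Y^\dagger$ or $Y^\dagger\subseteq X$, and there are no other edges. A dominating set is a set $S$ of vertices such that every vertex not in $S$ is adjacent to some vertex of $S$; the domination number is the minimum size of a dominating set. *)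

From mathcomp Require Import all_boot all_order.
Set Implicit Arguments. Unset Strict Implicit. Unset Printing Implicit Defensive.

(* Encoding: the signed element  (-1)^b * x_(i+1)  of {+-x_1,...,+-x_n} is the
   pair (i, b) : 'I_n * bool  (b = true means negative sign).  Since
   0 < x_1 < ... < x_n, this map is injective, |(-1)^b x_(i+1)| = x_(i+1)
   corresponds to the index i, and comparing absolute values is comparing
   indices.  Hence the graph below is isomorphic to H_B(n,k) for every such
   choice of reals. *)
Definition sgnelt (n : nat) := ('I_n * bool)%type.

Definition Bn (n : nat) : {set sgnelt n} :=
  [set p | ~~ (p.2 && (val p.1 == n.-1))].

Definition Bn_plus (n : nat) : {set sgnelt n} := [set p | ~~ p.2].

Definition phiB (n : nat) : {set {set sgnelt n}} :=
  [set S : {set sgnelt n} |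
    [&& S \subset Bn n, S != set0,
        [forall p in S, forall q in S, (p.1 == q.1) ==> (p == q)] &
        [forall p in S, [forall q in S, (q.1 <= p.1)%N] ==> ~~ p.2]]].

Definition dagger (n : nat) (S : {set sgnelt n}) : {set 'I_n} := [set p.1 | p in S].

Definition V1 (n k : nat) : {set {set sgnelt n}} :=
  [set S : {set sgnelt n} | (S \subset Bn_plus n) && (#|S| == k)].

Definition V2 (n k : nat) : {set {set sgnelt n}} := phiB n :\: V1 n k.

Definition HB_vertices (n k : nat) : {set {set sgnelt n}} := V1 n k :|: V2 n k.

Definition HB_adj (n k : nat) (X Y : {set sgnelt n}) : bool :=
  let e A B := [&& A \in V1 n k, B \in V2 n k &
                   (dagger A \subset dagger B) || (dagger B \subset dagger A)] in
  e X Y || e Y X.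

Definition dominating (T : finType) (V : {set T}) (adj : rel T) (D : {set T}) : bool :=
  (D \subset V) && [forall v in V, (v \notin D) ==> [exists u in D, adj u v]].

Definition is_domination_number (T : finType) (V : {set T}) (adj : rel T) (g : nat) : Prop :=
  (exists D : {set T}, dominating V adj D /\ #|D| = g) /\
  (forall D : {set T}, dominating V adj D -> g <= #|D|).

Arguments dagger n S : clear implicits.
Arguments HB_adj n k X Y : clear implicits.

From mathcomp Require Import all_boot all_order zify.
Set Implicit Arguments. Unset Strict Implicit. Unset Printing Implicit Defensive.

(* A vertex W of V_2 is adjacent exactly to the k-subsets X of B_n^+ whose
   absolute values are comparable with W^dagger, so V_1 dominates, as every
   index set is comparable with some k-set.  Conversely let D dominate and
   write X^+ for the positive vertex over a k-set X.  For k >= 2, the vertex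
   obtained from X^+ by negating its least element lies in V_2 and X^+ is its
   only neighbour in V_1; so whenever X^+ is missing from D, that vertex is in
   D, and these vertices are distinct.  For k = 1 no vertex of V_2 has a single
   absolute value, and a missing {i}^+ is compensated instead by a two-element
   vertex over {i, j} with {j}^+ also missing, from which i can be recovered;
   if {i}^+ is the only one missing, its dominator lies in V_2.  In both cases
   |V_1 \ D| <= |D ∩ V_2|, whence |D| >= |V_1| = C(n, k). *)


Section FinsetCounting.
Variables T T' : finType.

Lemma leq_card_in_set (f : T -> T') (A : {set T}) (B : {set T'}) :
  {in A &, injective f} -> {in A, forall x, f x \in B} -> #|A| <= #|B|.
Proof.
move=> injf fB; rewrite -(card_in_imset injf); apply: subset_leq_card.
by apply/subsetP => _ /imsetP[x xA ->]; exact: fB.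
Qed.

Lemma exists_subset_card (I : {set T}) m : m <= #|I| ->
  exists2 A : {set T}, A \subset I & #|A| = m.
Proof.
case/card_geqP => s [s_uniq s_size sI]; exists [set x in s].
  by apply/subsetP => x; rewrite inE => /sI.
by rewrite cardsE (card_uniqP s_uniq).
Qed.

Lemma exists_card_comparable (I : {set T}) k : k <= #|T| ->
  exists2 A : {set T}, #|A| = k & (A \subset I) || (I \subset A).
Proof.
move=> kT; have [kI|Ik] := leqP k #|I|.
  by have [A AI cA] := exists_subset_card kI; exists A; rewrite ?AI.
have [B BI' cB] : exists2 B : {set T}, B \subset ~: I & #|B| = k - #|I|.
  by apply: exists_subset_card; have := cardsC I; lia.
exists (I :|: B); last by rewrite subsetUl orbT.
have /eqP IB0 : I :&: B == set0 by rewrite setI_eq0 disjoint_sym disjoints_subset.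
by rewrite cardsU IB0 cB cards0; lia.
Qed.

End FinsetCounting.

Lemma dominating_neighbour (T : finType) (V : {set T}) (adj : rel T) D v :
  dominating V adj D -> v \in V -> v \notin D -> exists2 u, u \in D & adj u v.
Proof.
case/andP=> _ /forall_inP dom vV vD.
by apply/exists_inP; rewrite (implyP (dom v vV)).
Qed.

Section SignedSets.
Variable n : nat.
Implicit Types (A B : {set 'I_n}) (s : pred 'I_n) (S : {set sgnelt n}).

Definition signed A s : {set sgnelt n} := [set (i, s i) | i in A].

Definition pos A := signed A xpred0.

Lemma in_signed A s p : (p \in signed A s) = (p.1 \in A) && (p.2 == s p.1).
Proof.
case: p => i b /=; apply/imsetP/andP => [[j jA [-> ->]]|[iA /eqP->]] //.
by exists i.
Qed.

Lemma in_dagger S i : (i \in dagger n S) = [exists b, (i, b) \in S].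
Proof.
apply/imsetP/existsP => [[[j b] jS /= ->]|[b bS]]; first by exists b.
by exists (i, b).
Qed.

Lemma dagger_signed A s : dagger n (signed A s) = A.
Proof.
apply/setP => i; rewrite in_dagger; apply/existsP/idP => [[b]|iA].
  by rewrite in_signed => /andP[].
by exists (s i); rewrite in_signed /= iA eqxx.
Qed.

Lemma card_signed A s : #|signed A s| = #|A|.
Proof. by apply: card_imset => i j [->]. Qed.

Lemma signed_sign_eq A s t : signed A s = signed A t -> {in A, s =1 t}.
Proof.
move=> e i iA; have := in_signed A s (i, s i); rewrite e in_signed /= iA eqxx.
by move/eqP.
Qed.

Lemma pos_inj : injective pos.
Proof. by move=> A B /(congr1 (dagger n)); rewrite !dagger_signed. Qed.

Lemma pos_dagger S : S \subset Bn_plus n -> pos (dagger n S) = S.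
Proof.
move=> /subsetP SBp; apply/setP => [[i b]]; rewrite in_signed /= in_dagger.
apply/idP/idP => [/andP[/existsP[c cS] /eqP->]|iS].
  by have := SBp _ cS; rewrite inE /=; case: c cS.
have := SBp _ iS; rewrite inE /= => /negbTE->; rewrite eqxx andbT.
by apply/existsP; exists b.
Qed.

Lemma V1P k S : reflect (exists2 A, S = pos A & #|A| = k) (S \in V1 n k).
Proof.
rewrite inE; apply: (iffP andP) => [[SBp /eqP cS]|[A -> cA]].
  by exists (dagger n S); rewrite ?pos_dagger // -cS -{2}(pos_dagger SBp) card_signed.
split; last by rewrite card_signed cA.
by apply/subsetP => p; rewrite in_signed inE => /andP[_ /eqP->].
Qed.

Lemma card_V1 k : #|V1 n k| = 'C(n, k).
Proof.
have -> : V1 n k = pos @: [set A : {set 'I_n} | #|A| == k].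
  apply/setP => S; apply/V1P/imsetP => [[A -> cA]|[A]].
    by exists A; rewrite ?inE ?cA.
  by rewrite inE => /eqP cA ->; exists A.
by rewrite card_imset ?card_draws ?card_ord //; exact: pos_inj.
Qed.

Lemma signed_V1 k A s : signed A s \in V1 n k -> #|A| = k /\ {in A, forall i, ~~ s i}.
Proof.
case/V1P=> B e cB; have eAB : A = B by rewrite -(dagger_signed A s) e dagger_signed.
by subst B; split=> // i /(signed_sign_eq e) ->.
Qed.

Lemma signed_phiB A s : A != set0 ->
  {in A, forall i, s i -> exists2 j, j \in A & (i < j)%N} -> signed A s \in phiB n.
Proof.
move=> /set0Pn[i0 i0A] sA; rewrite inE; apply/and4P; split.
- apply/subsetP => _ /imsetP[i iA ->]; rewrite inE /=.
  apply/negP => /andP[/(sA i iA)[j _ ij] /eqP iE]; have := ltn_ord j; lia.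
- by apply/set0Pn; exists (i0, s i0); rewrite in_signed /= i0A eqxx.
- apply/forall_inP => p; rewrite in_signed => /andP[_ /eqP ep].
  apply/forall_inP => q; rewrite in_signed => /andP[_ /eqP eq].
  by apply/implyP => /eqP e1; rewrite [p]surjective_pairing [q]surjective_pairing ep eq e1.
- apply/forall_inP => p; rewrite in_signed => /andP[pA /eqP->].
  apply/implyP => /forall_inP top; apply/negP => /(sA _ pA)[j jA pj].
  by have := top (j, s j); rewrite in_signed /= jA eqxx leqNgt pj => /(_ isT).
Qed.

End SignedSets.

Section HBGraph.
Variables n k : nat.
Implicit Types (A : {set 'I_n}) (X W u : {set sgnelt n}).

Local Notation comparable A B := ((A \subset B) || (B \subset A)).

Lemma V1_notin_V2 X : X \in V1 n k -> X \notin V2 n k.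
Proof. by move=> XV1; rewrite inE XV1. Qed.

Lemma HB_adj_V2 u W : W \in V2 n k -> HB_adj n k u W ->
  u \in V1 n k /\ comparable (dagger n u) (dagger n W).
Proof.
move=> WV2 /orP[/and3P[-> _ c] // | /and3P[WV1]].
by rewrite (negbTE (V1_notin_V2 WV1)) in WV2.
Qed.

Lemma HB_adj_V1 u X : X \in V1 n k -> HB_adj n k u X -> u \in V2 n k.
Proof.
move=> XV1 /orP[/and3P[_ XV2] | /and3P[_ -> //]].
by rewrite (negbTE (V1_notin_V2 XV1)) in XV2.
Qed.

Lemma V1_comparable_pos A X : #|A| = k -> X \in V1 n k ->
  comparable (dagger n X) A -> X = pos A.
Proof.
move=> cA /V1P[B -> cB]; rewrite dagger_signed => BA; congr pos; apply/eqP.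
by case/orP: BA => BA; [|rewrite eq_sym]; rewrite eqEcard BA cA cB leqnn.
Qed.

Lemma V1_dominating : k <= n -> dominating (HB_vertices n k) (HB_adj n k) (V1 n k).
Proof.
move=> kn; apply/andP; split; first exact: subsetUl.
apply/forall_inP => W; rewrite inE => /orP[-> // | WV2]; apply/implyP => _.
rewrite -[n]card_ord in kn; have [A cA AW] := exists_card_comparable (dagger n W) kn.
have PA : pos A \in V1 n k by apply/V1P; exists A.
by apply/exists_inP; exists (pos A); rewrite // /HB_adj PA WV2 dagger_signed AW.
Qed.

Lemma dominating_V2_mem D W : dominating (HB_vertices n k) (HB_adj n k) D ->
  W \in V2 n k -> (forall X, X \in V1 n k -> HB_adj n k X W -> X \notin D) -> W \in D.
Proof.
move=> domD WV2 notD; apply: contraT => WD.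
have WV : W \in HB_vertices n k by rewrite inE WV2 orbT.
have [u uD uW] := dominating_neighbour domD WV WD.
by have [uV1 _] := HB_adj_V2 WV2 uW; rewrite (negbTE (notD u uV1 uW)) in uD.
Qed.

Lemma binomial_leq_card D :
  #|V1 n k :\: D| <= #|D :&: V2 n k| -> 'C(n, k) <= #|D|.
Proof.
move=> V1D; rewrite -card_V1 -(cardsID D (V1 n k)) setIC.
have V12 : V1 n k :&: V2 n k = set0.
  by apply/setP => X; rewrite in_setI in_set0; apply/negP => /andP[/V1_notin_V2/negP].
apply: (@leq_trans (#|D :&: V1 n k| + #|D :&: V2 n k|)); first by rewrite leq_add2l.
rewrite -cardsUI setIACA setIid V12 setI0 cards0 addn0 -setIUr.
exact/subset_leq_card/subsetIl.
Qed.

End HBGraph.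

Section LowerBound.
Variable n : nat.
Implicit Types (A : {set 'I_n}) (i j : 'I_n) (X : {set sgnelt n}).
Implicit Types (D : {set {set sgnelt n}}).

Definition negmin A := signed A (fun i => [forall j in A, (i <= j)%N]).

Lemma negmin_V2 k A : 1 < #|A| -> negmin A \in V2 n k.
Proof.
case/card_gt1P=> x [y [xA yA xy]]; rewrite inE; apply/andP; split.
  apply/negP => /signed_V1[_ allpos].
  have [m mA mmin] := arg_minnP (fun i : 'I_n => val i) xA.
  by have /negP[] := allpos m mA; apply/forall_inP.
apply: signed_phiB => [|i iA /forall_inP imin]; first by apply/set0Pn; exists x.
have [j jA ji] : exists2 j, j \in A & j != i.
  by case: (eqVneq x i) => [<-|]; [exists y; rewrite // eq_sym | exists x].
by exists j; rewrite // ltn_neqAle val_eqE eq_sym ji imin.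
Qed.

Lemma card_V1_notin_ge2 k D : 1 < k -> dominating (HB_vertices n k) (HB_adj n k) D ->
  #|V1 n k :\: D| <= #|D :&: V2 n k|.
Proof.
move=> k2 domD; apply: (@leq_card_in_set _ _ (fun X => negmin (dagger n X))).
  move=> _ _ /setDP[/V1P[A -> _] _] /setDP[/V1P[B -> _] _] /(congr1 (dagger n)).
  by rewrite !dagger_signed => ->.
move=> _ /setDP[/V1P[A -> cA] AD]; rewrite dagger_signed.
have WV2 : negmin A \in V2 n k by apply: negmin_V2; rewrite cA.
rewrite in_setI WV2 andbT; apply: (dominating_V2_mem domD WV2) => Y YV1.
by case/(HB_adj_V2 WV2) => _; rewrite dagger_signed => /(V1_comparable_pos cA YV1)->.
Qed.

(* The vertex over {i, j} in which i is negative if i < j and is the larger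
   index otherwise, so that i can be read off the vertex. *)
Definition marked_pair i j := signed [set i; j] (fun x => (x == i) && (i < j)%N).

Lemma marked_pair_V2 i j : i != j -> marked_pair i j \in V2 n 1.
Proof.
move=> ij; rewrite inE; apply/andP; split.
  by apply/negP => /signed_V1[]; rewrite cards2 ij.
apply: signed_phiB => [|x _ /andP[/eqP-> ij_lt]].
  by apply/set0Pn; exists i; rewrite !inE eqxx.
by exists j; rewrite // !inE eqxx orbT.
Qed.

Lemma marked_pair_inj i1 j1 i2 j2 : i1 != j1 -> i2 != j2 ->
  marked_pair i1 j1 = marked_pair i2 j2 -> i1 = i2.
Proof.
move=> ij1 ij2 e.
have h1 : (i1, (i1 < j1)%N) \in marked_pair i2 j2 by rewrite -e in_signed /= !inE !eqxx.
have h2 : (i2, (i2 < j2)%N) \in marked_pair i1 j1 by rewrite e in_signed /= !inE !eqxx.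
apply: val_inj; move: h1 h2 ij1 ij2; rewrite !in_signed /= !inE -!val_eqE /=; lia.
Qed.

Lemma marked_pair_neighbour i j X : i != j -> X \in V1 n 1 ->
  HB_adj n 1 X (marked_pair i j) -> X = pos [set i] \/ X = pos [set j].
Proof.
move=> ij XV1 /(HB_adj_V2 (marked_pair_V2 ij))[_].
case/V1P: XV1 => B -> /eqP/cards1P[x ->]; rewrite !dagger_signed => /orP[|].
  by rewrite sub1set !inE => /orP[]/eqP->; [left | right].
by move/subset_leq_card; rewrite cards1 cards2 ij.
Qed.

Lemma card_V1_notin_1 D : dominating (HB_vertices n 1) (HB_adj n 1) D ->
  #|V1 n 1 :\: D| <= #|D :&: V2 n 1|.
Proof.
move=> domD; pose U := [set i | pos [set i] \notin D].
have PV1 i : pos [set i] \in V1 n 1 by apply/V1P; exists [set i]; rewrite ?cards1.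
have -> : V1 n 1 :\: D = [set pos [set i] | i in U].
  apply/setP => X; apply/setDP/imsetP => [[/V1P[A -> /eqP/cards1P[i ->]] XD] | [i]].
    by exists i; rewrite ?inE.
  by move=> iU ->; split; [exact: PV1 | move: iU; rewrite inE].
rewrite card_in_imset; last by move=> i j _ _ /pos_inj/set1_inj.
have [U_le1 | U_gt1] := leqP #|U| 1.
  have [-> | [i iU]] := set_0Vmem U; first by rewrite cards0.
  have iV : pos [set i] \in HB_vertices n 1 by rewrite inE PV1.
  have iD : pos [set i] \notin D by move: iU; rewrite inE.
  have [u uD ui] := dominating_neighbour domD iV iD.
  apply: (leq_trans U_le1); apply/card_gt0P.
  by exists u; rewrite in_setI uD (HB_adj_V1 (PV1 i) ui).
pose other i := odflt i [pick j in U :\ i].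
have otherP i : i \in U -> other i \in U /\ i != other i.
  rewrite /other => iU; case: pickP => [j | none] /=.
    by rewrite in_setD1 eq_sym => /andP[].
  by move: U_gt1; rewrite (cardsD1 i) iU (eq_card0 none).
apply: (@leq_card_in_set _ _ (fun i => marked_pair i (other i))).
  by move=> i1 i2 /otherP[_ o1] /otherP[_ o2]; apply: marked_pair_inj.
move=> i iU; have [oU io] := otherP i iU; have WV2 := marked_pair_V2 io.
rewrite in_setI WV2 andbT; apply: (dominating_V2_mem domD WV2) => X XV1.
by case/(marked_pair_neighbour io XV1)=> ->; [move: iU | move: oU]; rewrite inE.
Qed.

End LowerBound.

Theorem mainTheorem4 (n k : nat) (hn : 2 <= n) (hk1 : 1 <= k) (hkn : k < n) :
  is_domination_number (HB_vertices n k) (HB_adj n k) 'C(n, k).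
Proof.
split; first by exists (V1 n k); rewrite card_V1 V1_dominating // ltnW.
move=> D domD; apply: binomial_leq_card.
have [k_gt1 | k_le1] := ltnP 1 k; first exact: card_V1_notin_ge2.
have k1 : k = 1 by apply/eqP; rewrite eqn_leq k_le1 hk1.
by subst k; exact: card_V1_notin_1.
Qed.
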